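(* Let $A$ be a self-adjoint operator on a complex separable Hilbert space $\mathbb{H}$, and let $G$ be a metric operator associated with $A$, i.e. $G$ is a metric operator such that $G^{1/2}AG^{-1/2}$ is self-adjoint. Then for every nonzero $\psi\in\mathbb{H}$, $$\langle A\rangle_{\psi,G}:=\frac{\langle\psi,G^{1/2}AG^{-1/2}\psi\rangle}{\|\psi\|^2}=\frac{\langle\psi,A\psi\rangle}{\|\psi\|^2}=:\langle A\rangle_\psi .$$
   Context: A metric operator is a bounded, strictly positive, self-adjoint operator with bounded inverse. The quantity $\langle A\rangle_{\psi,G}$ is defined when $G^{-1/2}\psi\in\mathcal{D}(A)$, and $\langle A\rangle_\psi$ when $\psi\in\mathcal{D}(A)$; the inner product is linear in the second argument. *)

From mathcomp Require Import all_boot all_order all_algebra.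
From mathcomp Require Import reals.
From mathcomp Require Export complex.
Set Implicit Arguments. Unset Strict Implicit. Unset Printing Implicit Defensive.
Import Order.TTheory GRing.Theory Num.Theory.
Local Open Scope ring_scope.
Local Open Scope complex_scope.

Section Hilbert.
Variable R : realType.
Variable H : lmodType R[i].
(* inner product, conjugate-linear in the first and linear in the second argument *)
Variable ip : H -> H -> R[i].

Definition inner_product_axioms : Prop :=
  [/\ (forall x y z (a : R[i]), ip x (a *: y + z) = a * ip x y + ip x z),
      (forall x y, ip y x = (ip x y)^*),
      (forall x, 0 <= ip x x) &
      (forall x, ip x x = 0 -> x = 0)].

Definition hnorm (x : H) : R := Num.sqrt (complex.Re (ip x x)).

Definition hcauchy (u : nat -> H) : Prop :=
  forall e : R, 0 < e -> exists N, forall m n, (N <= m)%N -> (N <= n)%N ->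
    hnorm (u m - u n) < e.

Definition hconverges (u : nat -> H) (l : H) : Prop :=
  forall e : R, 0 < e -> exists N, forall n, (N <= n)%N -> hnorm (u n - l) < e.

Definition hcomplete : Prop :=
  forall u, hcauchy u -> exists l, hconverges u l.

Definition hseparable : Prop :=
  exists u : nat -> H, forall x (e : R), 0 < e -> exists n, hnorm (x - u n) < e.

Definition separable_hilbert : Prop :=
  [/\ inner_product_axioms, hcomplete & hseparable].

Definition subspace (D : H -> Prop) : Prop :=
  D 0 /\ forall (a : R[i]) x y, D x -> D y -> D (a *: x + y).

Definition dense (D : H -> Prop) : Prop :=
  forall x (e : R), 0 < e -> exists y, D y /\ hnorm (x - y) < e.

Definition linear_on (D : H -> Prop) (A : H -> H) : Prop :=
  forall (a : R[i]) x y, D x -> D y -> A (a *: x + y) = a *: A x + A y.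

(* A with domain D is self-adjoint: densely defined, linear, and equal to its
   adjoint A^* (same domain, same action).  Here
   D(A^* ) = {y | exists z, forall x in D, <A x, y> = <x, z>}, A^* y = z. *)
Definition self_adjoint (D : H -> Prop) (A : H -> H) : Prop :=
  [/\ subspace D, dense D, linear_on D A,
      (forall y, D y <-> exists z, forall x, D x -> ip (A x) y = ip x z) &
      (forall x y, D x -> D y -> ip (A x) y = ip x (A y))].

Definition bounded (T : H -> H) : Prop :=
  exists M : R, forall x, hnorm (T x) <= M * hnorm x.

Definition bounded_self_adjoint (T : {linear H -> H}) : Prop :=
  bounded T /\ forall x y, ip (T x) y = ip x (T y).

Definition metric_operator (G : {linear H -> H}) : Prop :=
  [/\ bounded_self_adjoint G,
      (forall x, x != 0 -> 0 < ip x (G x)) &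
      exists Gi : {linear H -> H},
        [/\ bounded Gi, (forall x, G (Gi x) = x) & (forall x, Gi (G x) = x)]].

Definition is_sqrt_op (G S : {linear H -> H}) : Prop :=
  [/\ bounded_self_adjoint S, (forall x, 0 <= ip x (S x)) & (forall x, S (S x) = G x)].

Definition is_inverse_op (S Si : {linear H -> H}) : Prop :=
  (forall x, S (Si x) = x) /\ (forall x, Si (S x) = x).

End Hilbert.

(* Write S = G^(1/2) and B = S A S^-1.  Pairing the adjoint characterisations of the
   domains of A and B shows that S and S^-1 exchange these domains and that
   S A S^-1 = S^-1 A S on them; hence G = S^2 leaves D(A) invariant and commutes with A.
   The real work is to pass from G to its square root without spectral theory.  For k
   large, T = 1 - G/k^2 is a strict contraction (S is bounded with bounded inverse).  Put
   Y_0 = 0, Y_(n+1) = (T + Y_n^2)/2 and P_n = k (1 - Y_n) ([defect], [sqrt_iter] and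
   [sqrt_approx] below): these are polynomials in G, S^2 - P_n^2 = 2k^2 (Y_n - Y_(n+1))
   decays geometrically and S + P_n is uniformly coercive, so P_n -> S geometrically.
   Each P_n commutes with A, whence |<A x, S u> - <S x, A u>|^2 <= C r^n for all n, so
   it vanishes, and self-adjointness of A turns this into S D(A) <= D(A) and A S = S A.
   Hence G^(-1/2) psi is in D(A) iff psi is, and S A S^-1 psi = A psi. *)

From HB Require Import structures.
From mathcomp Require Import all_boot all_order all_algebra.
From mathcomp Require Import reals complex.
From mathcomp Require Import ring lra.
Import Order.TTheory GRing.Theory Num.Theory.
Local Open Scope ring_scope.
Local Open Scope complex_scope.
Set Implicit Arguments. Unset Strict Implicit. Unset Printing Implicit Defensive.

Section ComplexModulus.
Variable R : realType.

Definition sqmod (z : R[i]) : R := complex.Re z ^+ 2 + complex.Im z ^+ 2.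

Lemma sqmod_le0 z : sqmod z <= 0 -> z = 0.
Proof.
case: z => a b; rewrite /sqmod /= => h.
have a0 : a ^+ 2 == 0 by rewrite eq_le sqr_ge0 andbT; have := sqr_ge0 b; lra.
have b0 : b ^+ 2 == 0 by rewrite eq_le sqr_ge0 andbT; have := sqr_ge0 a; lra.
by move: a0 b0; rewrite !sqrf_eq0 => /eqP -> /eqP ->.
Qed.

Lemma Re_sqr_le_sqmod z : complex.Re z ^+ 2 <= sqmod z.
Proof. by rewrite /sqmod lerDl sqr_ge0. Qed.

Lemma sqmodB_le a b : sqmod (a - b) <= 2 * (sqmod a + sqmod b).
Proof.
case: a b => [a1 a2] [b1 b2]; rewrite /sqmod /=.
have := sqr_ge0 (a1 + b1); have := sqr_ge0 (a2 + b2); nra.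
Qed.

Lemma Re_ge0 (z : R[i]) : 0 <= z -> 0 <= complex.Re z.
Proof. by rewrite lecE => /andP[]. Qed.

Lemma ReJ (z : R[i]) : complex.Re z^* = complex.Re z.
Proof. by case: z. Qed.

Lemma ReMr (a : R) (z : R[i]) : complex.Re (a%:C * z) = a * complex.Re z.
Proof. by case: z => ? ? /=; ring. Qed.

End ComplexModulus.

Section Domain.
Variables (R : realType) (H : lmodType R[i]) (D : H -> Prop) (A : H -> H).

Definition commute_on (X : H -> H) :=
  forall x, D x -> D (X x) /\ A (X x) = X (A x).

Hypotheses (D_subspace : subspace D) (A_linear : linear_on D A).

Lemma subspace0 : D 0.
Proof. by case: D_subspace. Qed.

Lemma subspaceP a x y : D x -> D y -> D (a *: x + y).
Proof. by case: D_subspace => _; apply. Qed.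

Lemma subspaceZ a x : D x -> D (a *: x).
Proof. by move=> Dx; rewrite -[_ *: _]addr0; apply: subspaceP Dx subspace0. Qed.

Lemma subspaceD x y : D x -> D y -> D (x + y).
Proof. by rewrite -[x in D (x + _)]scale1r; apply: subspaceP. Qed.

Lemma subspaceB x y : D x -> D y -> D (x - y).
Proof. by move=> Dx Dy; rewrite addrC -scaleN1r; apply: subspaceP. Qed.

Lemma linear_on0 : A 0 = 0.
Proof.
have := A_linear 1 subspace0 subspace0; rewrite scale1r addr0 scale1r.
by move/(congr1 (fun v => v - A 0)); rewrite subrr addrK.
Qed.

Lemma linear_onZ a x : D x -> A (a *: x) = a *: A x.
Proof.
by move=> Dx; rewrite -[_ *: _]addr0 (A_linear _ Dx subspace0) linear_on0 !addr0.
Qed.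

Lemma linear_onD x y : D x -> D y -> A (x + y) = A x + A y.
Proof. by move=> Dx Dy; rewrite -{1}[x]scale1r (A_linear _ Dx Dy) scale1r. Qed.

Lemma linear_onB x y : D x -> D y -> A (x - y) = A x - A y.
Proof.
by move=> Dx Dy; rewrite addrC -scaleN1r (A_linear _ Dy Dx) scaleN1r addrC.
Qed.

End Domain.

Section Geometric.
Variable R : realType.

Lemma Bernoulli_le1 (r : R) n :
  0 <= r -> r <= 1 -> r ^+ n * (1 + n%:R * (1 - r)) <= 1.
Proof.
move=> r_ge0 r_le1; elim: n => [|n IH]; first by rewrite mul0r addr0 mulr1.
have s_ge0 : 0 <= 1 - r by rewrite subr_ge0.
have -> : r ^+ n.+1 * (1 + n.+1%:R * (1 - r)) =
          r * (r ^+ n * (1 + n%:R * (1 - r))) + r ^+ n.+1 * (1 - r).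
  by rewrite exprS mulrS; ring.
have := ler_wpM2l r_ge0 IH; have := ler_wpM2r s_ge0 (exprn_ile1 n.+1 r_ge0 r_le1); lra.
Qed.

Lemma geometric_bound_le0 (a C r : R) :
  0 <= r -> r < 1 -> (forall n, a <= C * r ^+ n) -> a <= 0.
Proof.
move=> r_ge0 r_lt1 hC; rewrite leNgt; apply/negP => a_gt0.
have C_ge0 : 0 <= C by apply: le_trans (ltW a_gt0) _; have := hC 0%N; rewrite mulr1.
have s_gt0 : 0 < a * (1 - r) by rewrite mulr_gt0 // subr_gt0.
have /archi_boundP := divr_ge0 C_ge0 (ltW s_gt0).
set n := Num.Def.archi_bound _; rewrite ltr_pdivrMr // => hn.
have h1 : 0 <= 1 + n%:R * (1 - r) by rewrite addr_ge0 // mulr_ge0 // subr_ge0 ltW.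
have t1 : 0 <= (C * r ^+ n - a) * (1 + n%:R * (1 - r)).
  by rewrite mulr_ge0 // subr_ge0.
have t2 : 0 <= C * (1 - r ^+ n * (1 + n%:R * (1 - r))).
  by rewrite mulr_ge0 // subr_ge0 Bernoulli_le1 // ltW.
lra.
Qed.

End Geometric.

Section Hilbert.
Variables (R : realType) (H : lmodType R[i]) (ip : H -> H -> R[i]).
Hypothesis ipA : inner_product_axioms ip.

Lemma ip_scalar x : scalar (ip x).
Proof. by case: ipA => h _ _ _ a y z; apply: h. Qed.

HB.instance Definition _ x :=
  GRing.isLinear.Build R[i] H R[i] *%R (ip x) (ip_scalar x).

Lemma ipDr x y z : ip x (y + z) = ip x y + ip x z. Proof. exact: linearD. Qed.
Lemma ipBr x y z : ip x (y - z) = ip x y - ip x z. Proof. exact: linearB. Qed.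
Lemma ipZr x a y : ip x (a *: y) = a * ip x y. Proof. exact: linearZ. Qed.
Lemma ipr0 x : ip x 0 = 0. Proof. exact: linear0. Qed.

Lemma ipJ x y : ip y x = (ip x y)^*.
Proof. by case: ipA => _ h _ _; apply: h. Qed.

Lemma ipDl x y z : ip (x + y) z = ip x z + ip y z.
Proof. by rewrite ipJ linearD rmorphD /= -!ipJ. Qed.

Lemma ipBl x y z : ip (x - y) z = ip x z - ip y z.
Proof. by rewrite ipJ linearB rmorphB /= -!ipJ. Qed.

Lemma ipZl a x y : ip (a *: x) y = conjc a * ip x y.
Proof. by rewrite ipJ linearZ rmorphM /= -ipJ. Qed.

Lemma ip0l y : ip 0 y = 0.
Proof. by rewrite ipJ linear0 rmorph0. Qed.

Definition sqnorm x : R := complex.Re (ip x x).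

Lemma ip_sqnorm x : ip x x = (sqnorm x)%:C.
Proof.
case: ipA => _ _ /(_ x) + _; rewrite /sqnorm; case: (ip x x) => a b.
by rewrite lecE /= => /andP[/eqP ->].
Qed.

Lemma sqnorm_ge0 x : 0 <= sqnorm x.
Proof. by case: ipA => _ _ /(_ x) + _; rewrite ip_sqnorm ler0c. Qed.

Lemma sqnorm_eq0 x : sqnorm x = 0 -> x = 0.
Proof. by case: ipA => _ _ _ h x0; apply: h; rewrite ip_sqnorm x0. Qed.

Lemma sqnorm0 : sqnorm 0 = 0.
Proof. by rewrite /sqnorm ipr0. Qed.

Lemma sqnormB x y : sqnorm (x - y) = sqnorm x + sqnorm y - 2 * complex.Re (ip x y).
Proof.
rewrite /sqnorm ipBl !linearB /= (ipJ x y) !raddfB /= ReJ -/(sqnorm x) -/(sqnorm y).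
ring.
Qed.

Lemma sqnormBC x y : sqnorm (x - y) = sqnorm (y - x).
Proof. by rewrite !sqnormB (ipJ x y) ReJ; ring. Qed.

Lemma sqnormZ (a : R) x : sqnorm (a%:C *: x) = a ^+ 2 * sqnorm x.
Proof. by rewrite /sqnorm ipZl linearZ /= ip_sqnorm /=; ring. Qed.

Lemma sqnormD x y : sqnorm (x + y) = sqnorm x + sqnorm y + 2 * complex.Re (ip x y).
Proof.
by rewrite /sqnorm ipDl !linearD /= (ipJ x y) ReJ; ring.
Qed.

Lemma sqnorm_half x : sqnorm (2^-1%:C *: x) = 4^-1 * sqnorm x.
Proof. by rewrite sqnormZ expr2 -invfM; congr (_^-1 * _); lra. Qed.

Lemma sqnormD_le x y : sqnorm (x + y) <= 2 * (sqnorm x + sqnorm y).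
Proof. by have := sqnorm_ge0 (x - y); rewrite sqnormB sqnormD; lra. Qed.

Lemma Re_ip_le x y : 2 * complex.Re (ip x y) <= sqnorm x + sqnorm y.
Proof. by have := sqnorm_ge0 (x - y); rewrite sqnormB; lra. Qed.

Lemma Cauchy_Schwarz x y : sqmod (ip x y) <= sqnorm x * sqnorm y.
Proof.
have [x0|xn0] := eqVneq (sqnorm x) 0.
  by rewrite x0 mul0r (sqnorm_eq0 x0) ip0l /sqmod /= expr0n /= addr0.
pose v := ip x x *: y - ip x y *: x.
have hv : ip v v = (sqnorm x * (sqnorm x * sqnorm y - sqmod (ip x y)))%:C.
  rewrite /v ipBl !linearB /= !ipZl !linearZ /= !ip_sqnorm (ipJ x y).
  by case: (ip x y) => a b; rewrite /sqmod /=; simpc; congr (_ +i* _); ring.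
have := sqnorm_ge0 v; rewrite /sqnorm hv /= pmulr_rge0 ?subr_ge0 //.
by rewrite lt0r xn0 sqnorm_ge0.
Qed.

Lemma hnorm_sqr x : hnorm ip x ^+ 2 = sqnorm x.
Proof. by rewrite sqr_sqrtr // sqnorm_ge0. Qed.

Lemma bounded_sqnorm (T : H -> H) :
  bounded ip T -> exists M, 0 <= M /\ forall x, sqnorm (T x) <= M * sqnorm x.
Proof.
move=> [M hM]; exists (M ^+ 2); split => [|x]; first exact: sqr_ge0.
rewrite -!hnorm_sqr -exprMn ler_pXn2r ?nnegrE ?sqrtr_ge0 //.
exact: le_trans (sqrtr_ge0 _) (hM x).
Qed.

Lemma dense_orthogonal_eq0 (E : H -> Prop) w :
  dense ip E -> (forall x, E x -> ip x w = 0) -> w = 0.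
Proof.
move=> Edense Ew; apply: sqnorm_eq0; apply/eqP; apply: contraT => w_neq0.
have w_gt0 : 0 < hnorm ip w by rewrite sqrtr_gt0 lt0r w_neq0 sqnorm_ge0.
have [y [Ey]] := Edense w _ w_gt0.
rewrite ltr_sqrt ?lt0r ?w_neq0 ?sqnorm_ge0 // => lt_wy.
have ww : ip w w = ip (w - y) w by rewrite ipBl (Ew y Ey) subr0.
have := le_trans (Re_sqr_le_sqmod _) (Cauchy_Schwarz (w - y) w).
rewrite -ww -/(sqnorm w) expr2 ler_pM2r ?lt0r ?w_neq0 ?sqnorm_ge0 //.
by rewrite leNgt lt_wy.
Qed.

Lemma coercive_sqnorm_le (b : R) w v :
  0 <= b -> b * sqnorm w <= complex.Re (ip w v) -> b ^+ 2 * sqnorm w <= sqnorm v.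
Proof.
move=> b_ge0 hb; have [w0|w_neq0] := eqVneq (sqnorm w) 0.
  by rewrite w0 mulr0 sqnorm_ge0.
have w_gt0 : 0 < sqnorm w by rewrite lt0r w_neq0 sqnorm_ge0.
have hsq : (b * sqnorm w) ^+ 2 <= sqnorm w * sqnorm v.
  apply: le_trans (Cauchy_Schwarz w v); apply: le_trans (Re_sqr_le_sqmod _).
  by have := mulr_ge0 b_ge0 (sqnorm_ge0 w); move: hb; set c := complex.Re _; nra.
by rewrite -(ler_pM2l w_gt0); nra.
Qed.


Section SelfAdjoint.
Variables (D : H -> Prop) (A : H -> H).
Hypothesis A_sa : self_adjoint ip D A.

Lemma sa_subspace : subspace D. Proof. by case: A_sa. Qed.
Lemma sa_linear : linear_on D A. Proof. by case: A_sa. Qed.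
Lemma sa_dense : dense ip D. Proof. by case: A_sa. Qed.
Lemma sa_domain y : D y <-> exists z, forall x, D x -> ip (A x) y = ip x z.
Proof. by case: A_sa => _ _ _ /(_ y). Qed.
Lemma sa_sym x y : D x -> D y -> ip (A x) y = ip x (A y).
Proof. by case: A_sa => _ _ _ _; apply. Qed.

Section SquareRoot.
Variables (G S : {linear H -> H}).
Hypotheses (S_sym : forall x y, ip (S x) y = ip x (S y))
           (S_ge0 : forall x, 0 <= ip x (S x))
           (SS : forall x, S (S x) = G x)
           (G_commute : commute_on D A G).

Lemma G_sym x y : ip (G x) y = ip x (G y).
Proof. by rewrite -!SS !S_sym. Qed.

Lemma SG x : S (G x) = G (S x).
Proof. by rewrite -!SS. Qed.

Section Iteration.
Variables (k q : R).
Hypotheses (k_ge1 : 1 <= k) (q_ge0 : 0 <= q) (q_lt1 : q < 1).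

Definition defect x := x - (k ^- 2)%:C *: G x.

Hypothesis defect_contraction : forall x, sqnorm (defect x) <= q * sqnorm x.

Lemma defect_linear : linear defect.
Proof.
move=> a x y; rewrite /defect linearP scalerDr scalerBr !scalerA mulrC opprD.
by rewrite addrACA.
Qed.

Lemma defect_sym x y : ip (defect x) y = ip x (defect y).
Proof. by rewrite /defect ipBl ipBr ipZl ipZr conjc_real G_sym. Qed.

Fixpoint sqrt_iter n x :=
  if n is n.+1 then 2^-1%:C *: (defect x + sqrt_iter n (sqrt_iter n x)) else 0.
Local Notation Y := sqrt_iter.

Lemma sqrt_iter_linear n : linear (Y n).
Proof.
elim: n => [|n IH] a x y /=; first by rewrite scaler0 addr0.
rewrite defect_linear !IH scalerA mulrC -scalerA -scalerDr; congr (_ *: _).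
by rewrite [in RHS]scalerDr addrACA.
Qed.

HB.instance Definition _ n :=
  GRing.isLinear.Build R[i] H H *:%R (Y n) (sqrt_iter_linear n).

Lemma sqrt_iterD n x y : Y n (x + y) = Y n x + Y n y.
Proof. exact: linearD. Qed.

Lemma sqrt_iterB n x y : Y n (x - y) = Y n x - Y n y.
Proof. exact: linearB. Qed.

Lemma sqrt_iterZ n a x : Y n (a *: x) = a *: Y n x.
Proof. exact: linearZ. Qed.

Lemma sqrt_iter_commute (X : {linear H -> H}) :
  (forall x, X (G x) = G (X x)) -> forall n x, X (Y n x) = Y n (X x).
Proof.
move=> XG; elim=> [|n IH] x /=; first exact: linear0.
by rewrite linearZ linearD !IH /defect linearB linearZ XG.
Qed.

Lemma sqrt_iterC n m x : Y n (Y m x) = Y m (Y n x).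
Proof. by apply: sqrt_iter_commute => y; rewrite (sqrt_iter_commute (X := G)). Qed.

Lemma sqrt_iter_sym n x y : ip (Y n x) y = ip x (Y n y).
Proof.
elim: n x y => [|n IH] x y /=; first by rewrite ip0l ipr0.
by rewrite ipZl ipZr conjc_real ipDl ipDr !IH defect_sym.
Qed.

Definition rate := (1 + q) / 2.

Lemma rate_ge0 : 0 <= rate. Proof. by move: q_ge0; rewrite /rate; lra. Qed.
Lemma rate_lt1 : rate < 1. Proof. by move: q_lt1; rewrite /rate; lra. Qed.

Lemma q_le_rate : q <= rate. Proof. by move: q_lt1; rewrite /rate; lra. Qed.

Lemma sqrt_iter_bound n x : sqnorm (Y n x) <= rate * sqnorm x.
Proof.
elim: n x => [|n IH] x /=; first by rewrite sqnorm0 mulr_ge0 ?rate_ge0 ?sqnorm_ge0.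
rewrite sqnorm_half; apply: le_trans (ler_wpM2l _ (sqnormD_le _ _)) _; first lra.
have := ler_wpM2l rate_ge0 (IH x); have := ler_wpM2r (sqnorm_ge0 x) q_le_rate.
have := ler_wpM2l rate_ge0 (ler_wpM2r (sqnorm_ge0 x) (ltW rate_lt1)).
have := IH (Y n x); have := defect_contraction x; rewrite mul1r; lra.
Qed.

Lemma sqrt_iter_step n x : sqnorm (Y n.+1 x - Y n x) <= rate ^+ n * sqnorm x.
Proof.
elim: n x => [|n IH] x.
  rewrite /= subr0 addr0 sqnorm_half expr0 mul1r.
  by have := defect_contraction x; have := sqnorm_ge0 x; have := q_lt1; nra.
have -> : Y n.+2 x - Y n.+1 x =
    2^-1%:C *: (Y n.+1 (Y n.+1 x + Y n x) - Y n (Y n.+1 x + Y n x)).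
  rewrite -[LHS]/(2^-1%:C *: (defect x + Y n.+1 (Y n.+1 x))
                 - 2^-1%:C *: (defect x + Y n (Y n x))) -scalerBr.
  congr (_ *: _).
  by rewrite !sqrt_iterD (sqrt_iterC n.+1 n) addrKA [defect x + _]addrC addrKA.
rewrite sqnorm_half exprS; apply: le_trans (ler_wpM2l _ (IH _)) _; first lra.
have := sqnormD_le (Y n.+1 x) (Y n x).
have := sqrt_iter_bound n.+1 x; have := sqrt_iter_bound n x.
have := exprn_ge0 n rate_ge0; set p := rate ^+ n; nra.
Qed.

Definition coercivity := k * (1 - rate) / 2.

Lemma coercivity_gt0 : 0 < coercivity.
Proof.
by rewrite divr_gt0 // mulr_gt0 ?subr_gt0 ?rate_lt1 // (lt_le_trans ltr01 k_ge1).
Qed.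

Definition sqrt_approx n x := k%:C *: (x - Y n x).
Local Notation P := sqrt_approx.

Lemma sqrt_approx_linear n : linear (P n).
Proof.
move=> a x y; rewrite /P linearP opprD addrACA -scalerBr scalerDr.
by rewrite scalerA mulrC -scalerA.
Qed.

HB.instance Definition _ n :=
  GRing.isLinear.Build R[i] H H *:%R (P n) (sqrt_approx_linear n).

Lemma sqrt_approxB n x y : P n (x - y) = P n x - P n y.
Proof. exact: linearB. Qed.

Lemma sqrt_approx_sym n x y : ip (P n x) y = ip x (P n y).
Proof. by rewrite /P ipZl ipZr conjc_real ipBl ipBr sqrt_iter_sym. Qed.

Lemma S_sqrt_approx n x : S (P n x) = P n (S x).
Proof.
by rewrite /P linearZ linearB (sqrt_iter_commute (X := S)) // => y; rewrite SG.
Qed.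

Lemma sqrt_approx_coercive n w : coercivity * sqnorm w <= complex.Re (ip w (P n w)).
Proof.
rewrite /coercivity /P ipZr ReMr ipBr raddfB /= -/(sqnorm w).
have := Re_ip_le w (Y n w); have := sqrt_iter_bound n w; have := sqnorm_ge0 w.
have := rate_lt1; have := k_ge1; set a := complex.Re _; nra.
Qed.

Lemma sqrt_approx_sqr n u :
  P n (P n u) = (k ^+ 2)%:C *: ((u - Y n u) - (Y n u - Y n (Y n u))).
Proof. by rewrite {1}/P sqrt_iterZ sqrt_iterB -scalerBr scalerA -rmorphM /= expr2. Qed.

Lemma G_sub_sqrt_approx_sqr n u :
  G u - P n (P n u) = (2 * k ^+ 2)%:C *: (Y n u - Y n.+1 u).
Proof.
have k_neq0 : k != 0 by rewrite gt_eqF // (lt_le_trans ltr01 k_ge1).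
rewrite sqrt_approx_sqr.
rewrite -[Y n.+1 u]/(2^-1%:C *: (u - (k ^- 2)%:C *: G u + Y n (Y n u))).
move: (G u) (Y n u) (Y n (Y n u)) => g b d; set K := (k ^+ 2)%:C.
(* Both sides equal [g - K u + 2 K b - K d]. *)
have half : (2 * k ^+ 2)%:C * 2^-1%:C = K by rewrite -rmorphM /=; congr (_%:C); field.
have inv : K * (k ^- 2)%:C = 1 by rewrite -rmorphM /= mulfV ?expf_neq0.
have twice : (2 * k ^+ 2)%:C = K + K by rewrite mulr_natl rmorphMn /= mulr2n.
rewrite [RHS]scalerBr scalerA half [in RHS]scalerDr [in RHS]scalerBr scalerA inv.
rewrite scale1r !scalerBr twice scalerDl.
move: (K *: u) (K *: b) (K *: d) => U B V; rewrite !opprD !opprK !addrA.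
by congr (_ - V); rewrite [RHS]addrC -!addrA; congr (_ + _); rewrite addrC -addrA.
Qed.

Lemma S_sub_sqrt_approx n u :
  coercivity ^+ 2 * sqnorm (S u - P n u) <= 4 * k ^+ 4 * rate ^+ n * sqnorm u.
Proof.
set w := S u - P n u.
have SPw : S w + P n w = G u - P n (P n u).
  by rewrite /w linearB sqrt_approxB SS S_sqrt_approx addrA subrK.
have : coercivity * sqnorm w <= complex.Re (ip w (S w + P n w)).
  rewrite ipDr raddfD /=; have := sqrt_approx_coercive n w.
  by have := Re_ge0 (S_ge0 w); lra.
move/(coercive_sqnorm_le (ltW coercivity_gt0))/le_trans; apply.
rewrite SPw G_sub_sqrt_approx_sqr sqnormZ sqnormBC -mulrA.
have -> : (2 * k ^+ 2) ^+ 2 = 4 * k ^+ 4 by ring.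
by rewrite ler_wpM2l ?sqrt_iter_step // mulr_ge0 // exprn_ge0 // (le_trans ler01 k_ge1).
Qed.

Lemma commute_on_defect : commute_on D A defect.
Proof.
move=> x Dx; have [DGx AGx] := G_commute Dx.
have DcGx := subspaceZ sa_subspace (k ^- 2)%:C DGx.
split; first exact: (subspaceB sa_subspace Dx DcGx : D (defect x)).
by rewrite (linear_onB sa_linear) // (linear_onZ sa_subspace sa_linear) // AGx.
Qed.

Lemma commute_on_sqrt_iter n : commute_on D A (Y n).
Proof.
elim: n => [|n IH] x Dx.
  by split; [exact: subspace0 sa_subspace | exact: linear_on0 sa_subspace sa_linear].
have [DTx ATx] := commute_on_defect Dx; have [DYx AYx] := IH x Dx.
have [DYYx AYYx] := IH _ DYx; have DS := subspaceD sa_subspace DTx DYYx.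
split; first exact: (subspaceZ sa_subspace 2^-1%:C DS : D (Y n.+1 x)).
rewrite /= (linear_onZ sa_subspace sa_linear) // (linear_onD sa_linear) //.
by rewrite ATx AYYx AYx.
Qed.

Lemma commute_on_sqrt_approx n : commute_on D A (P n).
Proof.
move=> x Dx; have [DYx AYx] := commute_on_sqrt_iter n Dx.
have DS := subspaceB sa_subspace Dx DYx.
split; first exact: (subspaceZ sa_subspace k%:C DS : D (P n x)).
by rewrite (linear_onZ sa_subspace sa_linear) // (linear_onB sa_linear) // AYx.
Qed.

Lemma commutator_bound n x u : D x -> D u ->
  coercivity ^+ 2 * sqmod (ip (A x) (S u) - ip (S x) (A u)) <=
  8 * k ^+ 4 * (sqnorm (A x) * sqnorm u + sqnorm x * sqnorm (A u)) * rate ^+ n.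
Proof.
move=> Dx Du; have [DPx APx] := commute_on_sqrt_approx n Dx.
have -> : ip (A x) (S u) - ip (S x) (A u) =
          ip (A x) (S u - P n u) - ip (S x - P n x) (A u).
  by rewrite ipBr ipBl -sqrt_approx_sym -APx (sa_sym DPx Du) opprB addrA subrK.
set B := coercivity ^+ 2; have B_ge0 : 0 <= B := sqr_ge0 _.
have := ler_wpM2l B_ge0 (sqmodB_le (ip (A x) (S u - P n u)) (ip (S x - P n x) (A u))).
have := ler_wpM2l B_ge0 (Cauchy_Schwarz (A x) (S u - P n u)).
have := ler_wpM2l B_ge0 (Cauchy_Schwarz (S x - P n x) (A u)).
have := ler_wpM2l (sqnorm_ge0 (A x)) (S_sub_sqrt_approx n u).
have := ler_wpM2r (sqnorm_ge0 (A u)) (S_sub_sqrt_approx n x).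
rewrite -/B; lra.
Qed.

Lemma commutator_eq0 x u : D x -> D u -> ip (A x) (S u) = ip (S x) (A u).
Proof.
move=> Dx Du; apply/eqP; rewrite -subr_eq0; apply/eqP; apply: sqmod_le0.
have B_gt0 : 0 < coercivity ^+ 2 := exprn_gt0 _ coercivity_gt0.
rewrite -(pmulr_rle0 _ B_gt0); apply: (geometric_bound_le0 rate_ge0 rate_lt1) => n.
exact: commutator_bound.
Qed.

End Iteration.

Lemma exists_contraction (MS m : R) :
  0 <= MS -> 1 <= m ->
  (forall x, sqnorm (S x) <= MS * sqnorm x) ->
  (forall x, sqnorm x <= m * sqnorm (S x)) ->
  exists k q,
    [/\ 1 <= k, 0 <= q, q < 1 & forall x, sqnorm (defect k x) <= q * sqnorm x].
Proof.
(* With [c = k^-2] and [c MS <= 1]: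
   [|defect y|^2 <= |y|^2 - c |S y|^2 <= (1 - c / m) |y|^2]. *)
move=> MS_ge0 m_ge1 S_le le_S; pose k := MS + 1; pose c := k ^- 2.
have k_ge1 : 1 <= k by rewrite lerDr.
have k2_gt0 : 0 < k ^+ 2 by rewrite exprn_gt0 // (lt_le_trans ltr01 k_ge1).
have c_gt0 : 0 < c by rewrite invr_gt0.
have cMS : c * MS <= 1.
  by rewrite mulrC ler_pdivrMr // mul1r expr2 /k; nra.
have c_le1 : c <= 1 by rewrite invf_le1 // expr2; nra.
have m_gt0 : 0 < m := lt_le_trans ltr01 m_ge1.
exists k, (1 - c / m); split => //.
- by rewrite subr_ge0 ler_pdivrMr // mul1r (le_trans c_le1 m_ge1).
- by rewrite ltrBlDr ltrDl divr_gt0.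
move=> y; rewrite /defect sqnormB ipZr ReMr sqnormZ -/c.
have -> : complex.Re (ip y (G y)) = sqnorm (S y) by rewrite -SS -S_sym.
have := ler_wpM2l (sqr_ge0 c) (S_le (S y)); rewrite SS.
have := ler_wpM2r (mulr_ge0 (ltW c_gt0) (sqnorm_ge0 (S y))) cMS.
have : sqnorm y / m <= sqnorm (S y) by rewrite ler_pdivrMr // mulrC.
move/(ler_wpM2l (ltW c_gt0)); lra.
Qed.

Theorem sqrt_commute_on (MS m : R) :
  0 <= MS -> 1 <= m ->
  (forall x, sqnorm (S x) <= MS * sqnorm x) ->
  (forall x, sqnorm x <= m * sqnorm (S x)) ->
  commute_on D A S.
Proof.
move=> MS_ge0 m_ge1 S_le le_S.
have [k [q [k_ge1 q_ge0 q_lt1 contraction]]] :=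
  exists_contraction MS_ge0 m_ge1 S_le le_S.
have comm := commutator_eq0 k_ge1 q_ge0 q_lt1 contraction.
move=> u Du; have DSu : D (S u).
  by apply/sa_domain; exists (S (A u)) => x Dx; rewrite comm // S_sym.
split => //; apply/eqP; rewrite -subr_eq0; apply/eqP.
apply: (dense_orthogonal_eq0 sa_dense) => x Dx.
by rewrite ipBr -(sa_sym Dx DSu) comm // S_sym subrr.
Qed.

End SquareRoot.
End SelfAdjoint.

Section Similarity.
Variables (D : H -> Prop) (A : H -> H) (G S Si : {linear H -> H}).
Hypotheses (A_sa : self_adjoint ip D A) (G_metric : metric_operator ip G)
           (S_sqrt : is_sqrt_op ip G S) (S_inv : is_inverse_op S Si)
           (B_sa : self_adjoint ip (fun x => D (Si x)) (fun x => S (A (Si x)))).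

Lemma S_sym x y : ip (S x) y = ip x (S y). Proof. by case: S_sqrt => [[]]. Qed.
Lemma S_ge0 x : 0 <= ip x (S x). Proof. by case: S_sqrt. Qed.
Lemma SS x : S (S x) = G x. Proof. by case: S_sqrt. Qed.
Lemma SSi x : S (Si x) = x. Proof. by case: S_inv. Qed.
Lemma SiS x : Si (S x) = x. Proof. by case: S_inv. Qed.

Lemma Si_sym x y : ip (Si x) y = ip x (Si y).
Proof. by rewrite -{1}[y]SSi -S_sym SSi. Qed.

Lemma dom_Si_of_dom_S y : D (S y) -> D (Si y).
Proof.
move=> DSy; apply/(sa_domain B_sa); exists (Si (A (S y))) => x Dx.
by rewrite S_sym (sa_sym A_sa) // Si_sym.
Qed.

Lemma dom_S_of_dom_Si y : D (Si y) -> D (S y).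
Proof.
move/(sa_domain B_sa) => [z Bz]; apply/(sa_domain A_sa); exists (S z) => x Dx.
have := Bz (S x); rewrite SiS => /(_ Dx) BSx.
by rewrite -S_sym BSx S_sym.
Qed.

Lemma S_A_Si y : D (S y) -> S (A (Si y)) = Si (A (S y)).
Proof.
move=> DSy; have DSiy := dom_Si_of_dom_S DSy.
apply/eqP; rewrite -subr_eq0; apply/eqP; apply: (dense_orthogonal_eq0 (sa_dense B_sa)).
by move=> x Dx; rewrite ipBr -(sa_sym B_sa) // S_sym (sa_sym A_sa) // Si_sym subrr.
Qed.

Lemma G_commute : commute_on D A G.
Proof.
move=> u Du; have DSSu : D (S (S u)) by apply: dom_S_of_dom_Si; rewrite SiS.
split; first by rewrite -SS.
by have := S_A_Si DSSu; rewrite SiS -!SS => ->; rewrite SSi.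
Qed.

Lemma S_bound : exists MS, 0 <= MS /\ forall x, sqnorm (S x) <= MS * sqnorm x.
Proof. by apply: bounded_sqnorm; case: S_sqrt => [[]]. Qed.

Lemma S_inv_bound : exists m, 1 <= m /\ forall x, sqnorm x <= m * sqnorm (S x).
Proof.
case: G_metric => _ _ [Gi [/bounded_sqnorm [MG [MG_ge0 Gi_le]] GGi _]].
have [MS [MS_ge0 S_le]] := S_bound.
exists (MS * MG + 1); split => [|x]; first by rewrite lerDr mulr_ge0.
have Si_eq y : Si y = S (Gi y) by rewrite -{1}[y]GGi -SS SiS.
rewrite -{1}[x]SiS Si_eq; apply: le_trans (S_le _) _.
by have := ler_wpM2l MS_ge0 (Gi_le (S x)); have := sqnorm_ge0 (S x); lra.
Qed.

Lemma S_commute : commute_on D A S.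
Proof.
have [MS [MS_ge0 S_le]] := S_bound; have [m [m_ge1 le_S]] := S_inv_bound.
exact (sqrt_commute_on A_sa S_sym S_ge0 SS G_commute MS_ge0 m_ge1 S_le le_S).
Qed.

Lemma dom_Si y : D (Si y) <-> D y.
Proof.
split => [/S_commute[]|/S_commute[/dom_Si_of_dom_S]//]; by rewrite SSi.
Qed.

Lemma S_A_Si_eq y : D y -> S (A (Si y)) = A y.
Proof. by move=> Dy; have [_ <-] := S_commute (proj2 (dom_Si y) Dy); rewrite SSi. Qed.

End Similarity.

End Hilbert.

Theorem proposition3p3 (R : realType) (H : lmodType R[i]) (ip : H -> H -> R[i])
    (D : H -> Prop) (A : H -> H) (G S Si : {linear H -> H}) :
  separable_hilbert ip ->
  self_adjoint ip D A ->
  metric_operator ip G ->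
  is_sqrt_op ip G S ->
  is_inverse_op S Si ->
  self_adjoint ip (fun x => D (Si x)) (fun x => S (A (Si x))) ->
  forall psi : H, psi != 0 ->
    (D (Si psi) <-> D psi) /\
    (D (Si psi) -> D psi ->
       ip psi (S (A (Si psi))) / ((hnorm ip psi) ^+ 2)%:C
       = ip psi (A psi) / ((hnorm ip psi) ^+ 2)%:C).
Proof.
move=> [ipA _ _] A_sa G_metric S_sqrt S_inv B_sa psi _.
split; first exact (dom_Si ipA A_sa G_metric S_sqrt S_inv B_sa psi).
by move=> _ Dpsi; rewrite (S_A_Si_eq ipA A_sa G_metric S_sqrt S_inv B_sa Dpsi).
Qed.
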